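(* Let $X$ be a separable real Banach space and let $(\Omega,\beta,\mu)$ be a complete probability measure space. Let $T:\Omega\times X\to X$ be a continuous random mapping such that there are real-valued random variables $\alpha_4,\alpha_5:\Omega\to[0,\infty)$ with $\alpha_4(\omega)+\alpha_5(\omega)<1$ for all $\omega\in\Omega$ and, for every $\omega\in\Omega$ and all $X$-valued random variables $x_1,x_2:\Omega\to X$, $$\|T(\omega,x_1(\omega))-T(\omega,x_2(\omega))\|\le \alpha_4(\omega)\|x_1(\omega)-T(\omega,x_2(\omega))\|+\alpha_5(\omega)\|x_2(\omega)-T(\omega,x_1(\omega))\|.$$ Then $T$ has a random fixed point, and it is unique (any two random fixed points of $T$ coincide almost surely).
   Context: An $X$-valued random variable is a map $x:\Omega\to X$ such that $x^{-1}(B)\in\beta$ for every Borel set $B\subseteq X$. A random mapping is a map $T:\Omega\times X\to X$ such that $\omega\mapsto T(\omega,x)$ is an $X$-valued random variable for every fixed $x\in X$. A random mapping $T$ is continuous if the set of $\omega\in\Omega$ for which $x\mapsto T(\omega,x)$ is continuous has $\mu$-measure one. A random fixed point of $T$ is an $X$-valued random variable $x$ with $\mu\{\omega\in\Omega: T(\omega,x(\omega))=x(\omega)\}=1$. *)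

From HB Require Import structures.
From mathcomp Require Import all_boot all_order all_algebra.
From mathcomp Require Import all_classical all_reals all_analysis.
Set Implicit Arguments. Unset Strict Implicit. Unset Printing Implicit Defensive.
Import Order.TTheory GRing.Theory Num.Theory.
Import numFieldNormedType.Exports.
Local Open Scope classical_set_scope.
Local Open Scope ring_scope.

Definition borel_set (X : topologicalType) (B : set X) : Prop := <<s open >> B.

Definition separable_space (X : topologicalType) : Prop :=
  exists D : set X, countable D /\ dense D.

Definition X_random_variable d (Omega : measurableType d) (X : topologicalType)
  (x : Omega -> X) : Prop :=
  forall B : set X, borel_set B -> measurable (x @^-1` B).

Definition random_mapping d (Omega : measurableType d) (X : topologicalType)
  (T : Omega -> X -> X) : Prop :=
  forall x : X, X_random_variable (fun w => T w x).

Definition measure_one d (Omega : measurableType d) (R : realType)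
  (mu : set Omega -> \bar R) (P : Omega -> Prop) : Prop :=
  measurable [set w | P w] /\ mu [set w | P w] = 1%E.

Definition continuous_random_mapping d (Omega : measurableType d) (R : realType)
  (mu : set Omega -> \bar R) (X : topologicalType) (T : Omega -> X -> X) : Prop :=
  random_mapping T /\ measure_one mu (fun w => continuous (T w)).

Definition random_fixed_point d (Omega : measurableType d) (R : realType)
  (mu : set Omega -> \bar R) (X : topologicalType) (T : Omega -> X -> X)
  (x : Omega -> X) : Prop :=
  X_random_variable x /\ measure_one mu (fun w => T w (x w) = x w).

From HB Require Import structures.
From mathcomp Require Import all_boot all_order all_algebra.
From mathcomp Require Import all_classical all_reals all_analysis.
From mathcomp Require Import lra.
Set Implicit Arguments. Unset Strict Implicit. Unset Printing Implicit Defensive.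
Import Order.TTheory GRing.Theory Num.Theory.
Import numFieldNormedType.Exports.
Local Open Scope classical_set_scope.
Local Open Scope ring_scope.

(* For fixed w, the hypothesis applied to constant random variables says that
   T w satisfies a generalized Chatterjea condition with constants
   a = alpha4 w and b = alpha5 w.  Then Picard iterates of
   T w contract by the factor (a + b) / (2 - (a + b)) and converge to its unique
   fixed point p w.  The bounds (1 - a - b) |x - p w| <= (1 - a) |x - T w x|
   <= 2 |x - p w| express the distance to p w, up to measurable factors, by the
   measurable quantity |x - T w x|; testing against a dense sequence in X makes
   p measurable.  Uniqueness holds pointwise, hence on the intersection of two
   measure-one events, and completeness makes the event [x = y] measurable. *)

(* With a = b this is Chatterjea's contraction condition. *)
Definition chatterjea (R : realType) (X : normedModType R) (a b : R) (f : X -> X) :=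
  forall x y, `|f x - f y| <= a * `|x - f y| + b * `|y - f x|.

Section ChatterjeaMap.
Variables (R : realType) (X : normedModType R) (a b : R) (f : X -> X).
Hypotheses (a_ge0 : 0 <= a) (b_ge0 : 0 <= b) (ab_lt1 : a + b < 1).
Hypothesis f_chatterjea : chatterjea a b f.

(* [lra] does not use section hypotheses, so they are moved into the goal. *)
Let subr1a_gt0 : 0 < 1 - a. Proof. by move: b_ge0 ab_lt1; lra. Qed.

Lemma chatterjea_dist_fixed_le p x : f p = p ->
  (1 - a - b) * `|x - p| <= (1 - a) * `|x - f x|.
Proof.
move=> fp; have := f_chatterjea p x; rewrite fp => fpx.
have xp_le := ler_distD (f x) x p; rewrite (distrC (f x) p) in xp_le.
have : (1 - a) * `|x - p| <= (1 - a) * (`|x - f x| + `|p - f x|).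
  by apply: ler_wpM2l; [exact: ltW | exact: xp_le].
lra.
Qed.

Lemma chatterjea_displacement_le p x : f p = p ->
  (1 - a) * `|x - f x| <= 2 * `|x - p|.
Proof.
move=> fp; have := f_chatterjea p x; rewrite fp => fpx.
have : (1 - a) * `|x - f x| <= (1 - a) * (`|x - p| + `|p - f x|).
  by apply: ler_wpM2l; [exact: ltW | exact: ler_distD].
have : (1 - a + b) * `|x - p| <= 2 * `|x - p|.
  by apply: ler_wpM2r => //; move: a_ge0 b_ge0 ab_lt1; lra.
lra.
Qed.

Lemma chatterjea_fixed_unique p p' : f p = p -> f p' = p' -> p = p'.
Proof.
move=> fp fp'; have := chatterjea_dist_fixed_le p' fp; rewrite fp' subrr normr0 mulr0.
rewrite pmulr_rle0; last by move: ab_lt1; lra.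
by rewrite normr_le0 subr_eq0 => /eqP.
Qed.

(* Adding the condition at (f z, z) and at (z, f z) gives
   2 d <= (a + b) (|f z - z| + d) for d := |f (f z) - f z|. *)
Let q := (a + b) / (2 - (a + b)).

Lemma chatterjea_contraction_factor : 0 <= q < 1.
Proof.
have s2 : 0 < 2 - (a + b) by move: ab_lt1; lra.
apply/andP; split; first exact: divr_ge0 (addr_ge0 a_ge0 b_ge0) (ltW s2).
by rewrite /q ltr_pdivrMr // mul1r; move: ab_lt1; lra.
Qed.

Lemma chatterjea_picard_step z : `|f (f z) - f z| <= q * `|f z - z|.
Proof.
have s2 : 0 < 2 - (a + b) by move: ab_lt1; lra.
rewrite /q mulrAC ler_pdivlMr // mulrC.
have := f_chatterjea (f z) z; rewrite subrr normr0 mulr0 add0r => e1.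
have := f_chatterjea z (f z); rewrite subrr normr0 mulr0 addr0 => e2.
rewrite (distrC (f z) (f (f z))) in e2.
have := ler_distD (f z) z (f (f z)).
rewrite (distrC z (f z)) (distrC (f z) (f (f z))) => tri.
have : (a + b) * `|z - f (f z)| <= (a + b) * (`|f z - z| + `|f (f z) - f z|).
  by apply: ler_wpM2l => //; exact: addr_ge0.
lra.
Qed.

Lemma chatterjea_picard_dist x n :
  `|iter n.+1 f x - iter n f x| <= `|f x - x| * q ^+ n.
Proof.
have [q_ge0 _] := andP chatterjea_contraction_factor.
elim: n => [|n IH]; first by rewrite expr0 mulr1.
rewrite exprS mulrCA.
exact: le_trans (chatterjea_picard_step _) (ler_wpM2l q_ge0 IH).
Qed.

(* No continuity of f is needed: the condition at (iter N f x, p) bounds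
   (1 - a) |p - f p| by a multiple of the distances from p to the iterates. *)
Lemma chatterjea_limit_fixed x p : iter n f x @[n --> \oo] --> p -> f p = p.
Proof.
move=> /cvgrPdist_lt cvgp.
suff : (1 - a) * `|p - f p| <= 0.
  by rewrite pmulr_rle0 // normr_le0 subr_eq0 => /eqP pfp; rewrite -pfp.
apply/ler_addgt0Pr => e e_gt0; rewrite add0r.
have [N _ closeN] := cvgp (e / 2) (divr_gt0 e_gt0 (ltr0Sn _ 1)).
have close0 := closeN N (leqnn N); have close1 := closeN N.+1 (leqnSn N).
have := f_chatterjea (iter N f x) p; rewrite -iterS (distrC p) => e1.
have t1 := ler_distD (iter N.+1 f x) p (f p).
have t2 := ler_distD p (iter N f x) (f p).
have : a * `|iter N f x - f p| <= a * (`|iter N f x - p| + `|p - f p|).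
  by apply: ler_wpM2l; [exact: a_ge0 | exact: t2].
have : a * `|iter N f x - p| <= a * (e / 2).
  by apply: ler_wpM2l => //; rewrite distrC; exact: ltW close0.
have : b * `|iter N.+1 f x - p| <= b * (e / 2).
  by apply: ler_wpM2l => //; rewrite distrC; exact: ltW close1.
have : (a + b) * (e / 2) <= e / 2.
  by rewrite ler_piMl ?divr_ge0 ?ltW //; exact: ltW.
rewrite (distrC p (iter N.+1 f x)) in close1 t1.
lra.
Qed.

End ChatterjeaMap.

Lemma cvg_geometric_increments (R : realType) (X : completeNormedModType R)
    (u : nat -> X) (C q : R) :
  0 <= q < 1 -> (forall n, `|u n.+1 - u n| <= C * q ^+ n) -> cvgn u.
Proof.
move=> /andP[q_ge0 q_lt1] du.
have : cvgn (series (telescope u)).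
  apply: normed_cvg; apply: (@series_le_cvg _ _ (geometric C q)).
  - by move=> n; exact: normr_ge0.
  - by move=> n; exact: le_trans (normr_ge0 _) (du n).
  - exact: du.
  - by apply: is_cvg_geometric_series; rewrite ger0_norm.
rewrite telescopeK => cvg_sub.
have -> : u = (fun n => (u n - u 0%N) + u 0%N) by apply/funext => n; rewrite subrK.
by apply: is_cvgD => //; exact: is_cvg_cst.
Qed.

Lemma chatterjea_fixed_point (R : realType) (X : completeNormedModType R)
    (a b : R) (f : X -> X) :
  0 <= a -> 0 <= b -> a + b < 1 -> chatterjea a b f -> exists p, f p = p.
Proof.
move=> a_ge0 b_ge0 ab_lt1 fC.
have cvg_iter : cvgn (fun n => iter n f 0).
  exact: cvg_geometric_increments (chatterjea_contraction_factor a_ge0 b_ge0 ab_lt1)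
    (chatterjea_picard_dist a_ge0 b_ge0 ab_lt1 fC 0).
exists (limn (fun n => iter n f 0)).
exact: chatterjea_limit_fixed a_ge0 b_ge0 ab_lt1 fC _ _ cvg_iter.
Qed.

Section RandomVariables.
Context d (Omega : measurableType d).

Lemma X_random_variable_cst (X : topologicalType) (a : X) :
  X_random_variable (fun _ : Omega => a).
Proof.
move=> B _; have [Ba|nBa] := pselect (B a).
- by rewrite (_ : _ @^-1` B = setT) //; apply/seteqP; split.
- by rewrite (_ : _ @^-1` B = set0) //; apply/seteqP; split.
Qed.

Lemma X_random_variable_open (X : topologicalType) (x : Omega -> X) :
  (forall O, open O -> measurable (x @^-1` O)) -> X_random_variable x.
Proof.
move=> mxO; apply: smallest_sub mxO; split.
- by rewrite /= preimage_set0; exact: measurable0.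
- by move=> A mA; rewrite /= setTD preimage_setC; exact: measurableC.
- by move=> F mF; rewrite /= preimage_bigcup; exact: bigcupT_measurable.
Qed.

Lemma measurable_fun_continuous_comp (R : realType) (X : topologicalType)
    (h : X -> R) (x : Omega -> X) :
  continuous h -> X_random_variable x -> measurable_fun setT (h \o x).
Proof.
move=> hC xrv; apply: (measurability _ (measurable_realfun.RGenOpens.measurableE R)).
move=> _ [_ [a [b ->]] <-]; rewrite setTI comp_preimage.
apply: xrv; apply: sub_sigma_algebra.
exact: (proj1 (continuousP _) hC _ (interval_open _ _)).
Qed.

Lemma separable_dense_seq (R : realType) (X : normedModType R) :
  separable_space X -> exists e : nat -> X,
    forall (x : X) (eps : R), 0 < eps -> exists j, `|e j - x| < eps.
Proof.
move=> [D [cD dD]]; have [e e_onto] := pcard_surjP cD.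
exists e => x eps eps_gt0.
have [z [xz Dz]] : ball x eps `&` D !=set0.
  by apply: dD; [exists x; exact: ballxx | exact: ball_open].
have [j _ ejz] := e_onto z Dz.
by exists j; move: xz; rewrite ejz distrC -ball_normE.
Qed.

(* A two-sided bound on the distances [|a - x w|] by measurable quantities is
   enough: the preimage of an open set is a countable union of sets of the form
   [g (e j) < r * c], over centres [e j] of a dense sequence and radii [r]. *)
Lemma X_random_variable_dist_bounds (R : realType) (X : normedModType R)
    (x : Omega -> X) (g : X -> Omega -> R) (c : Omega -> R) (K : R) :
  separable_space X -> 0 < K -> measurable_fun setT c -> (forall w, 0 < c w) ->
  (forall a, measurable_fun setT (g a)) ->
  (forall a w, c w * `|a - x w| <= g a w <= K * `|a - x w|) ->
  X_random_variable x.
Proof.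
move=> sepX K_gt0 mc c_gt0 mg g_bounds.
have [e e_dense] := separable_dense_seq sepX.
pose M j (n : nat) := [set w | g (e j) w < n.+1%:R^-1 * c w].
have mM j n : measurable (M j n).
  have := measurable_realfun.measurable_fun_ltr (mg (e j))
    (measurable_realfun.measurable_funM (measurable_cst (n.+1%:R^-1 : R)) mc).
  by move=> /(_ measurableT [set true] I); rewrite setTI.
apply: X_random_variable_open => O oO.
suff -> : x @^-1` O = \bigcup_j \bigcup_(n in [set n | ball (e j) n.+1%:R^-1 `<=` O]) M j n.
  by apply: bigcupT_measurable => j; apply: bigcup_measurable => n _; exact: mM.
apply/seteqP; split => w /=.
- move=> Oxw; have /nbhs_ballP[eps /= eps_gt0 ballO] : nbhs (x w) O.
    exact: open_nbhs_nbhs.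
  have [n _ /(_ n (leqnn n)) n_lt] :=
    near_infty_natSinv_lt (PosNum (divr_gt0 eps_gt0 (ltr0Sn _ 1))).
  set r := n.+1%:R^-1 in n_lt *.
  have r_gt0 : 0 < r by rewrite invr_gt0.
  have delta_gt0 : 0 < Num.min r (r * c w / K).
    by rewrite lt_min r_gt0 divr_gt0 ?mulr_gt0.
  have [j ej_close] := e_dense (x w) _ delta_gt0.
  move: ej_close; rewrite lt_min => /andP[ej_r ej_rc].
  exists j => //; exists n.
  + move=> z; rewrite -ball_normE /= -/r => ejz; apply: ballO; rewrite -ball_normE /=.
    have := ler_distD (e j) (x w) z; rewrite (distrC (x w) (e j)).
    by move: n_lt => /= n_lt; lra.
  + have [_ gK] := andP (g_bounds (e j) w).
    apply: le_lt_trans gK _; rewrite -ltr_pdivlMl // mulrC.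
    by move: ej_rc; rewrite mulrAC.
- move=> [j _ [n ballO Mw]]; apply: ballO; rewrite -ball_normE /=.
  have [cg _] := andP (g_bounds (e j) w).
  by rewrite -(ltr_pM2l (c_gt0 w)) [X in _ < X]mulrC; exact: le_lt_trans cg Mw.
Qed.

End RandomVariables.

Section MeasureOne.
Context d (Omega : measurableType d) (R : realType) (mu : probability Omega R).

Lemma measure_oneT (P : Omega -> Prop) : (forall w, P w) -> measure_one mu P.
Proof.
move=> allP; rewrite /measure_one (_ : [set w | P w] = setT).
  by split; [exact: measurableT | exact: probability_setT].
by apply/seteqP; split=> w // _; exact: allP.
Qed.

Lemma measure_one_negligibleC (P : Omega -> Prop) :
  measure_one mu P -> mu.-negligible (~` [set w | P w]).
Proof.
move=> [mP P1]; apply/negligibleP; first exact: measurableC.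
by have := probability_setC mu mP; rewrite P1 subee.
Qed.

Lemma negligibleC_measure_one (P : Omega -> Prop) : measure_is_complete mu ->
  mu.-negligible (~` [set w | P w]) -> measure_one mu P.
Proof.
move=> mu_complete nullCP.
have mCP := mu_complete _ nullCP.
have mP : measurable [set w | P w] by rewrite -[X in measurable X]setCK; exact: measurableC.
split => //; have := probability_setC mu mCP.
by rewrite setCK (measure_negligible mCP nullCP) sube0.
Qed.

End MeasureOne.

Lemma dist_continuous (R : realType) (X : normedModType R) (a : X) :
  continuous (fun z : X => `|a - z|).
Proof.
move=> z; apply: (@continuous_comp _ _ _ (fun y => a - y) (@Num.Def.normr _ X));
  last exact: norm_continuous.
exact: (@cvgB _ _ _ _ _ (fun=> a) id) (cvg_cst _) cvg_id.
Qed.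

Lemma chatterjea_fixed_point_random_variable (R : realType) (X : normedModType R)
    d (Omega : measurableType d) (T : Omega -> X -> X) (a b : Omega -> R)
    (p : Omega -> X) :
  separable_space X -> random_mapping T ->
  measurable_fun setT a -> measurable_fun setT b ->
  (forall w, 0 <= a w) -> (forall w, 0 <= b w) -> (forall w, a w + b w < 1) ->
  (forall w, chatterjea (a w) (b w) (T w)) -> (forall w, T w (p w) = p w) ->
  X_random_variable p.
Proof.
move=> sepX rvT ma mb a_ge0 b_ge0 ab_lt1 TC fixed_p.
have m1a : measurable_fun setT (fun w => 1 - a w).
  exact: measurable_realfun.measurable_funB (measurable_cst _) ma.
apply: (@X_random_variable_dist_bounds _ _ _ _ _
  (fun x w => (1 - a w) * `|x - T w x|) (fun w => 1 - a w - b w) 2) => //.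
- exact: measurable_realfun.measurable_funB m1a mb.
- by move=> w; have := ab_lt1 w; lra.
- move=> x; apply: measurable_realfun.measurable_funM m1a _.
  exact: measurable_fun_continuous_comp (@dist_continuous _ _ x) (rvT x).
- move=> x w; apply/andP; split.
  + exact: (chatterjea_dist_fixed_le (b_ge0 w) (ab_lt1 w) (TC w) x (fixed_p w)).
  + exact: (chatterjea_displacement_le (a_ge0 w) (b_ge0 w) (ab_lt1 w) (TC w) x (fixed_p w)).
Qed.

Theorem corollary3p5 (R : realType) (X : completeNormedModType R)
  (d : measure_display) (Omega : measurableType d)
  (mu : probability Omega R) (T : Omega -> X -> X)
  (alpha4 alpha5 : Omega -> R) :
  separable_space X ->
  measure_is_complete mu ->
  continuous_random_mapping mu T ->
  measurable_fun setT alpha4 -> measurable_fun setT alpha5 ->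
  (forall w, 0 <= alpha4 w) -> (forall w, 0 <= alpha5 w) ->
  (forall w, alpha4 w + alpha5 w < 1) ->
  (forall (x1 x2 : Omega -> X), X_random_variable x1 -> X_random_variable x2 ->
     forall w,
       `|T w (x1 w) - T w (x2 w)| <=
         alpha4 w * `|x1 w - T w (x2 w)| + alpha5 w * `|x2 w - T w (x1 w)|) ->
  (exists x : Omega -> X, random_fixed_point mu T x) /\
  (forall x y : Omega -> X, random_fixed_point mu T x -> random_fixed_point mu T y ->
     measure_one mu (fun w => x w = y w)).
Proof.
move=> sepX mu_complete [rvT _] m4 m5 a4_ge0 a5_ge0 a45_lt1 T_bound.
have TC w : chatterjea (alpha4 w) (alpha5 w) (T w).
  move=> a b.
  exact: T_bound (fun=> a) (fun=> b) (X_random_variable_cst _ a) (X_random_variable_cst _ b) w.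
split.
- have /all_sig[p fixed_p] : forall w, {p | T w p = p}.
    move=> w; apply: cid.
    exact: chatterjea_fixed_point (a4_ge0 w) (a5_ge0 w) (a45_lt1 w) (TC w).
  exists p; split; last exact: measure_oneT.
  exact: chatterjea_fixed_point_random_variable m4 m5 a4_ge0 a5_ge0 a45_lt1 TC fixed_p.
- move=> x y [_ fixed_x] [_ fixed_y]; apply: negligibleC_measure_one => //.
  apply: negligibleS (negligibleU (measure_one_negligibleC fixed_x)
                                   (measure_one_negligibleC fixed_y)).
  rewrite -setCI; apply: subsetC => w [/= Tx Ty].
  exact: (chatterjea_fixed_unique (a5_ge0 w) (a45_lt1 w) (TC w) Tx Ty).
Qed.
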